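(* There exists a $9\times 9$ bimagic square whose $81$ entries are pairwise distinct palindromic strings of length $8$ over $\{0,1,2\}$ (read as decimal numbers, leading zeros allowed), with magic sum $S1=99999999$, and such that each of the nine $3\times3$ blocks has entry sum $99999999$.
   Context: A magic square of order $n$ is an $n\times n$ array of numbers in which the sums of the entries of each row, of each column and of each of the two principal diagonals all equal a common value $S1$. It is bimagic if in addition the sums of the squares of the entries of each row, each column and each of the two principal diagonals all equal a common value $S2$. The $3\times3$ blocks are the subarrays with rows $3p+1,\dots,3p+3$ and columns $3q+1,\dots,3q+3$, $p,q\in\{0,1,2\}$. *)

(* entries are
   binary naturals N so that the concrete 8-digit values are computable. *)
From Stdlib Require Import NArith.
From mathcomp Require Import all_boot.
Set Implicit Arguments. Unset Strict Implicit. Unset Printing Implicit Defensive.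

Definition digitN (x : N) (k : nat) : N :=
  N.modulo (N.div x (N.pow 10 (N.of_nat k))) 10.

Definition pal8_012 (x : N) : Prop :=
  N.lt x (N.pow 10 8) /\
  forall k : 'I_8, N.le (digitN x k) 2 /\ digitN x k = digitN x (7 - k).

Notation "\sumN_ ( i < n ) F" := (\big[N.add/N0]_(i < n) F)
  (at level 41, F at level 41, i, n at level 50).
Notation "\sumN_ ( i < n | P ) F" := (\big[N.add/N0]_(i < n | P) F)
  (at level 41, F at level 41, i, n at level 50).

Section Magic.
Variable n : nat.
Implicit Type A : 'I_n -> 'I_n -> N.

Definition row_sum A (i : 'I_n) := \sumN_(j < n) A i j.
Definition col_sum A (j : 'I_n) := \sumN_(i < n) A i j.
Definition diag_sum A := \sumN_(i < n) A i i.
Definition antidiag_sum A := \sumN_(i < n) A i (rev_ord i).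

Definition magic_with_sum A (S : N) : Prop :=
  (forall i, row_sum A i = S) /\ (forall j, col_sum A j = S) /\
  diag_sum A = S /\ antidiag_sum A = S.

Definition sq_entries A : 'I_n -> 'I_n -> N := fun i j => N.mul (A i j) (A i j).

Definition bimagic_with_sum A (S1 : N) : Prop :=
  magic_with_sum A S1 /\ exists S2, magic_with_sum (sq_entries A) S2.
End Magic.

Definition block_sum (A : 'I_9 -> 'I_9 -> N) (p q : 'I_3) : N :=
  \sumN_(i < 9 | i %/ 3 == p) \sumN_(j < 9 | j %/ 3 == q) A i j.

(* The 81 entries are all the palindromes of length 8 over {0,1,2}, one for
   each choice of the first four digits, placed so that in every line and
   every 3x3 block each of the four independent digit positions takes the
   values 0, 1, 2 three times each; hence all these sums are
   9 * 11111111 = 99999999.  The sums of squares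
   are checked by evaluation. *)

From Stdlib Require Import NArith.
From mathcomp Require Import all_boot.

Definition sumN (s : seq N) : N := foldr N.add 0%num s.

Lemma sumN_mkord n (P : pred nat) (F : nat -> N) :
  \sumN_(i < n | P i) F i = sumN [seq F i | i <- iota 0 n & P i].
Proof.
rewrite -big_mkord /index_iota subn0 -big_filter -(big_map F xpredT id).
by rewrite unlock /reducebig /sumN foldr_map.
Qed.

Lemma sumN_ord n (F : nat -> N) :
  \sumN_(i < n) F i = sumN [seq F i | i <- iota 0 n].
Proof. by rewrite (sumN_mkord n xpredT) filter_predT. Qed.

Lemma all_iota_ord n (P : pred nat) : all P (iota 0 n) -> forall i : 'I_n, P i.
Proof. by move=> /allP all_P i; apply: all_P; rewrite mem_iota ltn_ord. Qed.

Lemma uniq_map_inj_in {T1 T2 : eqType} (f : T1 -> T2) {s : seq T1} :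
  uniq (map f s) -> {in s &, injective f}.
Proof.
elim: s => //= a s IHs /andP[fa_notin uniq_fs] x y.
rewrite !inE => /predU1P[-> | xs] /predU1P[-> | ys] // fxy.
- by move: fa_notin; rewrite fxy map_f.
- by move: fa_notin; rewrite -fxy map_f.
- exact: IHs.
Qed.

Definition pal8_012b (x : N) : bool :=
  (x <? 10 ^ 8)%num &&
  all (fun k => (digitN x k <=? 2)%num && (digitN x k == digitN x (7 - k)))
      (iota 0 8).

Lemma pal8_012bP x : pal8_012b x -> pal8_012 x.
Proof.
case/andP=> /N.ltb_lt x_lt /all_iota_ord digits; split=> // k.
by case/andP: (digits k) => /N.leb_le ? /eqP.
Qed.

Section MagicDecision.
Variable n : nat.
Implicit Type B : nat -> nat -> N.

Definition magic_with_sumb B (S : N) : bool :=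
  [&& all (fun i => sumN [seq B i j | j <- iota 0 n] == S) (iota 0 n),
      all (fun j => sumN [seq B i j | i <- iota 0 n] == S) (iota 0 n),
      sumN [seq B i i | i <- iota 0 n] == S &
      sumN [seq B i (n - i.+1) | i <- iota 0 n] == S].

Lemma magic_with_sumbP B S :
  magic_with_sumb B S -> magic_with_sum (fun i j : 'I_n => B i j) S.
Proof.
case/and4P=> /all_iota_ord rows /all_iota_ord cols /eqP diag /eqP antidiag.
split; [|split; [|split]].
- by move=> i; rewrite /row_sum (sumN_ord n (B i)); apply/eqP/rows.
- by move=> j; rewrite /col_sum (sumN_ord n (B^~ j)); apply/eqP/cols.
- by rewrite /diag_sum (sumN_ord n (fun i => B i i)).
- by rewrite /antidiag_sum (sumN_ord n (fun i => B i (n - i.+1))).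
Qed.

End MagicDecision.

Definition block_sumsb (B : nat -> nat -> N) (S : N) : bool :=
  all (fun p => all (fun q =>
    sumN [seq sumN [seq B i j | j <- iota 0 9 & j %/ 3 == q]
         | i <- iota 0 9 & i %/ 3 == p] == S) (iota 0 3)) (iota 0 3).

Lemma block_sumsbP B S :
  block_sumsb B S -> forall p q, block_sum (fun i j => B i j) p q = S.
Proof.
move=> /all_iota_ord blocks p q.
rewrite /block_sum (sumN_mkord 9 (fun i => i %/ 3 == p)
  (fun i => \sumN_(j < 9 | j %/ 3 == q) B i j)).
under eq_map do rewrite (sumN_mkord 9 (fun j => j %/ 3 == q)).
by apply/eqP; apply: all_iota_ord (blocks p) q.
Qed.

Definition bimagic_rows : seq (seq N) := [::
  [:: 0; 1111110; 2222220; 11022011; 12100121; 10211201; 22011022; 20122102; 21200212];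
  [:: 10122101; 11200211; 12011021; 21111112; 22222222; 20000002; 2100120; 211200; 1022010];
  [:: 20211202; 21022012; 22100122; 1200210; 2011020; 122100; 12222221; 10000001; 11111111];
  [:: 12200221; 10011001; 11122111; 20222202; 21000012; 22111122; 1211210; 2022020; 100100];
  [:: 22022022; 20100102; 21211212; 11000; 1122110; 2200220; 11000011; 12111121; 10222201];
  [:: 2111120; 222200; 1000010; 10100101; 11211211; 12022021; 21122112; 22200222; 20011002];
  [:: 21100112; 22211222; 20022002; 2122120; 200200; 1011010; 10111101; 11222211; 12000021];
  [:: 1222210; 2000020; 111100; 12211221; 10022001; 11100111; 20200202; 21011012; 22122122];
  [:: 11011011; 12122121; 10200201; 22000022; 20111102; 21222212; 22000; 1100110; 2211220]]%num.

Definition bimagic_entry (i j : nat) : N := nth 0%num (nth [::] bimagic_rows i) j.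

Definition cells9 : seq (nat * nat) := [seq (i, j) | i <- iota 0 9, j <- iota 0 9].

Lemma bimagic_entry_uniq : uniq [seq bimagic_entry ij.1 ij.2 | ij <- cells9].
Proof. by vm_compute. Qed.

Lemma bimagic_entry_pal8_012 :
  all (fun i => all (fun j => pal8_012b (bimagic_entry i j)) (iota 0 9)) (iota 0 9).
Proof. by vm_compute. Qed.

Lemma bimagic_entry_magic : magic_with_sumb 9 bimagic_entry 99999999.
Proof. by vm_compute. Qed.

Lemma bimagic_entry_sq_magic :
  magic_with_sumb 9 (fun i j => bimagic_entry i j * bimagic_entry i j)%num
    1717172174949495.
Proof. by vm_compute. Qed.

Lemma bimagic_entry_blocks : block_sumsb bimagic_entry 99999999.
Proof. by vm_compute. Qed.

Theorem mainTheorem6 :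
  exists A : 'I_9 -> 'I_9 -> N,
    (forall i j i' j' : 'I_9, A i j = A i' j' -> i = i' /\ j = j') /\
    (forall i j, pal8_012 (A i j)) /\
    bimagic_with_sum A (99999999%num) /\
    (forall p q : 'I_3, block_sum A p q = (99999999%num)).
Proof.
exists (fun i j : 'I_9 => bimagic_entry i j); split; [|split; [|split]].
- move=> i j i' j' eq_ij.
  have cell (k l : 'I_9) : (k : nat, l : nat) \in cells9.
    by apply: allpairs_f; rewrite mem_iota ltn_ord.
  have [] := uniq_map_inj_in _ bimagic_entry_uniq _ _ (cell i j) (cell i' j') eq_ij.
  by move=> /val_inj ? /val_inj ?.
- move=> i j; apply: pal8_012bP.
  by move/all_iota_ord: bimagic_entry_pal8_012 => /(_ i) /all_iota_ord.
- split; first exact: magic_with_sumbP bimagic_entry_magic.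
  by eexists; apply: magic_with_sumbP bimagic_entry_sq_magic.
- exact: block_sumsbP bimagic_entry_blocks.
Qed.
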